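(* Every direct summand of a semi-generalized Bassian group is semi-generalized Bassian.
   Context: All groups are additively written abelian groups. A subgroup $H$ of a group $A$ is essential in $A$ if $H \cap S \neq \{0\}$ for every non-zero subgroup $S$ of $A$. A group $G$ is semi-generalized Bassian if, for every subgroup $H \le G$, the existence of an injective homomorphism $G \to G/H$ implies that $H$ is an essential subgroup of some direct summand of $G$. *)

From HB Require Import structures.
From mathcomp Require Import all_boot all_algebra.
Set Implicit Arguments. Unset Strict Implicit. Unset Printing Implicit Defensive.
Import GRing.Theory.
Local Open Scope ring_scope.

Definition is_subgroup (G : zmodType) (H : G -> Prop) : Prop :=
  H 0 /\ (forall x y, H x -> H y -> H (x - y)).

Definition subgroup_le (G : zmodType) (H K : G -> Prop) : Prop :=
  forall x, H x -> K x.

Definition direct_summand (G : zmodType) (K : G -> Prop) : Prop :=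
  is_subgroup K /\
  exists L : G -> Prop, is_subgroup L /\
    (forall x, K x -> L x -> x = 0) /\
    (forall g, exists k l, K k /\ L l /\ g = k + l).

Definition essential_in (G : zmodType) (H K : G -> Prop) : Prop :=
  subgroup_le H K /\
  forall S : G -> Prop, is_subgroup S -> subgroup_le S K ->
    (exists s, S s /\ s <> 0) -> exists x, H x /\ S x /\ x <> 0.

(* There is an injective homomorphism G -> G/H.  The quotient G/H is
   given by any group Q with a surjective homomorphism pi : G -> Q whose
   kernel is exactly H (unique up to isomorphism). *)
Definition embeds_in_quotient (G : zmodType) (H : G -> Prop) : Prop :=
  exists (Q : zmodType) (pi : {additive G -> Q}) (phi : {additive G -> Q}),
    (forall q : Q, exists x, pi x = q) /\
    (forall x, pi x = 0 <-> H x) /\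
    injective phi.

Definition semi_gen_Bassian (G : zmodType) : Prop :=
  forall H : G -> Prop, is_subgroup H -> embeds_in_quotient H ->
    exists K : G -> Prop, direct_summand K /\ essential_in H K.

From HB Require Import structures.
From mathcomp Require Import all_boot all_algebra.
From mathcomp Require Import boolp.
Set Implicit Arguments. Unset Strict Implicit. Unset Printing Implicit Defensive.
Import GRing.Theory.
Local Open Scope ring_scope.

(* A direct summand A of G comes with a retraction rho of the inclusion i, and
   G = i(A) + ker rho.  An embedding of A into A/H yields one of G into
   A/H + ker rho, which is G/i(H); so i(H) is essential in a summand D = r(G)
   of G.  The endomorphism t = r i rho of D fixes i(H) pointwise.  It is
   injective on D, as its kernel meets i(H) trivially, and onto D, as t - 1
   kills i(H) and is therefore locally nilpotent on D, which is torsion over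
   i(H).  Hence A = rho(D) + ker (r i), and H is essential in rho(D). *)

Definition subgroup_image (U V : zmodType) (f : U -> V) (S : U -> Prop) : V -> Prop :=
  fun v => exists2 u, S u & f u = v.

Section Subgroup.
Variables (G : zmodType) (S : G -> Prop).
Hypothesis hS : is_subgroup S.

Lemma subgroup0 : S 0. Proof. exact: hS.1. Qed.

Lemma subgroupB x y : S x -> S y -> S (x - y). Proof. exact: hS.2. Qed.

Lemma subgroupN x : S x -> S (- x).
Proof. by move=> Sx; rewrite -sub0r; apply: subgroupB Sx; apply: subgroup0. Qed.

Lemma subgroupD x y : S x -> S y -> S (x + y).
Proof. by move=> Sx Sy; rewrite -[y]opprK; apply/subgroupB/subgroupN. Qed.

Lemma subgroupMn x n : S x -> S (x *+ n).
Proof.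
by move=> Sx; elim: n => [|n IHn]; [apply: subgroup0 | rewrite mulrS; apply: subgroupD].
Qed.

Lemma subgroupMz x z : S x -> S (x *~ z).
Proof.
by move=> Sx; case: z => n; rewrite ?NegzE ?mulrNz; [|apply: subgroupN]; apply: subgroupMn.
Qed.

End Subgroup.

Lemma is_subgroup_zero (G : zmodType) : is_subgroup (fun x : G => x = 0).
Proof. by split=> // x y -> ->; rewrite subrr. Qed.

Lemma is_subgroup_meet (G : zmodType) (S T : G -> Prop) :
  is_subgroup S -> is_subgroup T -> is_subgroup (fun x => S x /\ T x).
Proof.
move=> hS hT; split; first by split; apply: subgroup0.
by move=> x y [Sx Tx] [Sy Ty]; split; apply: subgroupB.
Qed.

Lemma is_subgroup_preim (U V : zmodType) (f : {additive U -> V}) (S : V -> Prop) :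
  is_subgroup S -> is_subgroup (fun u => S (f u)).
Proof.
move=> hS; split=> [|x y Sx Sy]; first by rewrite raddf0; apply: subgroup0.
by rewrite raddfB; apply: subgroupB.
Qed.

Lemma is_subgroup_image (U V : zmodType) (f : {additive U -> V}) (S : U -> Prop) :
  is_subgroup S -> is_subgroup (subgroup_image f S).
Proof.
move=> hS; split; first by exists 0; [apply: subgroup0 | rewrite raddf0].
by move=> _ _ [x Sx <-] [y Sy <-]; exists (x - y); [apply: subgroupB | rewrite raddfB].
Qed.

Lemma is_subgroup_cycle (G : zmodType) (x : G) :
  is_subgroup (fun y => exists z : int, y = x *~ z).
Proof.
split; first by exists 0; rewrite mulr0z.
by move=> _ _ [z1 ->] [z2 ->]; exists (z1 - z2); rewrite mulrzBr.
Qed.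

Lemma essential_in_mulrn (G : zmodType) (H D : G -> Prop) :
  is_subgroup H -> is_subgroup D -> essential_in H D -> forall x, D x -> x != 0 ->
  exists2 n, (0 < n)%N & H (x *+ n) /\ x *+ n != 0.
Proof.
move=> hH hD [_ essHD] x Dx /eqP x0.
have cycD : subgroup_le (fun y => exists z : int, y = x *~ z) D.
  by move=> _ [z ->]; apply: subgroupMz.
have [|y [Hy [[z yz] /eqP xz0]]] := essHD _ (is_subgroup_cycle x) cycD.
  by exists x; split=> //; exists 1; rewrite mulr1z.
subst y; case: z Hy xz0 => [[|n]|n]; rewrite ?mulr0z ?eqxx //.
  by exists n.+1.
rewrite NegzE mulrNz oppr_eq0 => Hy xn0; exists n.+1 => //.
by split=> //; rewrite -[_ *+ _]opprK; exact: subgroupN.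
Qed.

Lemma mulrn_gcdn_eq0 (V : zmodType) (x : V) m n :
  (0 < m)%N -> x *+ m = 0 -> x *+ n = 0 -> x *+ gcdn m n = 0.
Proof.
move=> m_gt0 xm0 xn0; case: (egcdnP n m_gt0) => km kn def_m _.
have /eqP : x *+ (km * m) = 0 by rewrite mulnC mulrnA xm0 mul0rn.
by rewrite def_m mulrnDr mulnC mulrnA xn0 mul0rn add0r => /eqP.
Qed.

Section KillingEssential.
Variables (G : zmodType) (H D : G -> Prop) (g : {additive G -> G}).
Hypotheses (hH : is_subgroup H) (hD : is_subgroup D) (essHD : essential_in H D).
Hypotheses (gD : forall x, D x -> D (g x)) (gH : forall h, H h -> g h = 0).

Lemma killing_essential_mulrn x : D x -> exists2 n, (0 < n)%N & g x *+ n = 0.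
Proof.
move=> Dx; have [->|x0] := eqVneq x 0; first by exists 1%N; rewrite // raddf0.
have [n n_gt0 [Hxn _]] := essential_in_mulrn hH hD essHD Dx x0.
by exists n; rewrite // -raddfMn gH.
Qed.

(* Induction on an annihilator N of x: an essential multiple x *+ n <> 0 shows
   that gcdn N n < N annihilates g x. *)
Lemma killing_essential_nilpotent_torsion N x :
  (0 < N)%N -> D x -> x *+ N = 0 -> exists k, iter k g x = 0.
Proof.
elim/ltn_ind: N x => N IHN x N_gt0 Dx xN0.
have [->|x0] := eqVneq x 0; first by exists 0%N.
have [n n_gt0 [Hxn xn0]] := essential_in_mulrn hH hD essHD Dx x0.
have gxN0 : g x *+ N = 0 by rewrite -raddfMn xN0 raddf0.
have gxn0 : g x *+ n = 0 by rewrite -raddfMn gH.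
have gcd_lt : (gcdn N n < N)%N.
  rewrite ltn_neqAle dvdn_leq ?dvdn_gcdl // andbT; apply: contra xn0 => /eqP.
  by move/gcdn_idPl/dvdnP=> [c ->]; rewrite mulnC mulrnA xN0 mul0rn.
have gcd_gt0 : (0 < gcdn N n)%N by rewrite gcdn_gt0 N_gt0.
have [k gk0] := IHN _ gcd_lt (g x) gcd_gt0 (gD Dx) (mulrn_gcdn_eq0 N_gt0 gxN0 gxn0).
by exists k.+1; rewrite iterSr.
Qed.

Lemma killing_essential_nilpotent x : D x -> exists k, iter k g x = 0.
Proof.
move=> Dx; have [n n_gt0 gxn0] := killing_essential_mulrn Dx.
have [k gk0] := killing_essential_nilpotent_torsion n_gt0 (gD Dx) gxn0.
by exists k.+1; rewrite iterSr.
Qed.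

End KillingEssential.

Lemma nilpotent_addr_onto (G : zmodType) (D : G -> Prop) (g : {additive G -> G}) :
  is_subgroup D -> (forall x, D x -> D (g x)) ->
  (forall x, D x -> exists k, iter k g x = 0) ->
  forall y, D y -> exists2 x, D x & x + g x = y.
Proof.
move=> hD gD g_nil y Dy; have [k] := g_nil y Dy.
elim: k y Dy => [|k IHk] y Dy.
  by move=> /= ->; exists 0; rewrite ?raddf0 ?addr0 //; apply: subgroup0.
rewrite iterSr => gk0; have [x Dx def_gy] := IHk _ (gD y Dy) gk0.
exists (y - x); first exact: subgroupB.
by rewrite raddfB -def_gy addrK subrK.
Qed.

Section FixingEssential.
Variables (G : zmodType) (H D : G -> Prop) (f : {additive G -> G}).
Hypotheses (hH : is_subgroup H) (hD : is_subgroup D) (essHD : essential_in H D).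
Hypotheses (fD : forall x, D x -> D (f x)) (fH : forall h, H h -> f h = h).

Lemma fixing_essential_inj x : D x -> f x = 0 -> x = 0.
Proof.
move=> Dx fx0; have [//|x0] := eqVneq x 0; exfalso.
have [|y [Hy [[_ fy0] y0]]] := essHD.2 _ (is_subgroup_meet hD
    (is_subgroup_preim f (is_subgroup_zero G))) (fun y => @proj1 _ _).
  by exists x; split=> //; apply/eqP.
by apply: y0; rewrite -(fH Hy).
Qed.

Lemma fixing_essential_onto y : D y -> exists2 x, D x & f x = y.
Proof.
have gD x : D x -> D ((f \- idfun) x) by move=> Dx; apply: subgroupB (fD Dx) Dx.
have gH h : H h -> (f \- idfun) h = 0 by move=> Hh; rewrite /= fH ?subrr.
move=> Dy; have [x Dx <-] := nilpotent_addr_onto hD gD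
  (killing_essential_nilpotent hH hD essHD gD gH) Dy.
by exists x; rewrite //= addrC subrK.
Qed.

End FixingEssential.

Lemma direct_summand_projection (G : zmodType) (D : G -> Prop) :
  direct_summand D ->
  exists r : {additive G -> G}, (forall g, D (r g)) /\ (forall d, D d -> r d = d).
Proof.
case=> hD [E [hE [DE0 DE]]].
have /choice[r rP] : forall g, exists d, D d /\ E (g - d).
  move=> g; have [d [e [Dd [Ee ->]]]] := DE g.
  by exists d; rewrite addrC addKr.
have r_uniq g d : D d -> E (g - d) -> r g = d.
  move=> Dd Egd; apply/eqP; rewrite -subr_eq0; apply/eqP/DE0.
    exact: subgroupB (rP g).1 Dd.
  by have := subgroupB hE Egd (rP g).2; rewrite opprB addrC addrA subrK.
have r_morph : zmod_morphism r.
  move=> x y; apply: r_uniq; first exact: subgroupB (rP x).1 (rP y).1.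
  have -> : x - y - (r x - r y) = (x - r x) - (y - r y).
    by rewrite !opprB addrACA [RHS]addrACA; congr (_ + _); apply: addrC.
  exact: subgroupB (rP x).2 (rP y).2.
pose rA : {additive G -> G} := HB.pack r (GRing.isZmodMorphism.Build _ _ r r_morph).
exists rA.
by split=> [g | d Dd]; [apply: (rP g).1 | apply: r_uniq; rewrite // subrr; apply: subgroup0].
Qed.

Lemma direct_summand_retraction (G A : zmodType) (K : G -> Prop) (i : {additive A -> G}) :
  direct_summand K -> injective i -> (forall g, K g <-> exists a, i a = g) ->
  exists rho : {additive G -> A}, cancel i rho.
Proof.
move=> sK inj_i Ki; have [r [rK r_id]] := direct_summand_projection sK.
have /choice[rho rhoP] : forall g, exists a, i a = r g by move=> g; apply/Ki.
have rho_morph : zmod_morphism rho.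
  by move=> x y; apply: inj_i; rewrite raddfB !rhoP raddfB.
pose rhoA : {additive G -> A} := HB.pack rho (GRing.isZmodMorphism.Build _ _ rho rho_morph).
by exists rhoA => a; apply: inj_i; rewrite /= rhoP r_id //; apply/Ki; exists a.
Qed.

Section Kernel.
Variables (U V : zmodType) (f : {additive U -> V}).

Definition kernel : {pred U} := [pred u | f u == 0].

Lemma kernel_zmod_closed : zmod_closed kernel.
Proof.
split=> [|x y]; rewrite !inE ?raddf0 //.
by rewrite raddfB => /eqP-> /eqP->; rewrite subrr.
Qed.

HB.instance Definition _ := GRing.isZmodClosed.Build U kernel kernel_zmod_closed.

Inductive kernel_type : predArgType := KernelElem u & u \in kernel.
Definition kernel_val w : U := let: KernelElem u _ := w in u.
HB.instance Definition _ := [isSub of kernel_type for kernel_val].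
HB.instance Definition _ := [Choice of kernel_type by <:].
HB.instance Definition _ := [SubChoice_isSubZmodule of kernel_type by <:].

End Kernel.

Section PairMorphism.
Variables (U V W : zmodType) (f : {additive U -> V}) (g : {additive U -> W}).

Definition pair_fun u := (f u, g u).

Lemma pair_fun_is_zmod_morphism : zmod_morphism pair_fun.
Proof. by move=> x y; rewrite /pair_fun !raddfB. Qed.

HB.instance Definition _ :=
  GRing.isZmodMorphism.Build U (V * W)%type pair_fun pair_fun_is_zmod_morphism.

End PairMorphism.

Section Retract.
Variables (G A : zmodType) (i : {additive A -> G}) (rho : {additive G -> A}).
Hypothesis iK : cancel i rho.

Lemma retract_complement_in_kernel g : g - i (rho g) \in kernel rho.
Proof. by rewrite inE raddfB iK subrr. Qed.

Definition retract_complement g : kernel_type rho :=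
  KernelElem (retract_complement_in_kernel g).

Lemma retract_complement_is_zmod_morphism : zmod_morphism retract_complement.
Proof.
move=> x y; apply: val_inj => /=.
by rewrite (raddfB rho) (raddfB i) !opprB addrACA [RHS]addrACA; congr (_ + _); apply: addrC.
Qed.

HB.instance Definition _ := GRing.isZmodMorphism.Build G (kernel_type rho)
  retract_complement retract_complement_is_zmod_morphism.

Lemma embeds_in_quotient_retract H :
  embeds_in_quotient H -> embeds_in_quotient (subgroup_image i H).
Proof.
case=> Q [pi [phi [pi_onto [pi_ker phi_inj]]]].
exists (Q * kernel_type rho)%type, (pair_fun (pi \o rho) retract_complement),
  (pair_fun (phi \o rho) retract_complement); split; [|split].
- case=> q l; have [a <-] := pi_onto q; exists (i a + kernel_val l).
  have rho_l : rho (kernel_val l) = 0 by apply/eqP; apply: (valP l).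
  congr pair => /=; first by rewrite raddfD iK rho_l addr0.
  by apply: val_inj; rewrite /= raddfD iK rho_l addr0 addrAC subrr add0r.
- move=> g; split=> [e | [h Hh <-]].
    have /pi_ker Hrg := congr1 fst e.
    have /(congr1 val)/eqP := congr1 snd e; rewrite subr_eq0 => /eqP def_g.
    by exists (rho g).
  congr pair => /=; first by rewrite iK; apply/pi_ker.
  by apply: val_inj; rewrite /= iK subrr.
- move=> x y e; have /phi_inj rho_xy := congr1 fst e.
  have /(congr1 val) /= comp_xy := congr1 snd e.
  by rewrite -(subrK (i (rho x)) x) comp_xy rho_xy subrK.
Qed.

Lemma essential_in_retract_image (H : A -> Prop) (D : G -> Prop) :
  is_subgroup D -> essential_in (subgroup_image i H) D ->
  essential_in H (subgroup_image rho D).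
Proof.
move=> hD essHD; split=> [h Hh | S hS SD [s [Ss s0]]].
  by exists (i h); [apply: essHD.1; exists h | rewrite iK].
pose S' x := D x /\ S (rho x).
have hS' : is_subgroup S' := is_subgroup_meet hD (is_subgroup_preim rho hS).
have [x Dx rho_x] := SD s Ss.
have [|y [[h Hh def_y] [[_ Sh] y0]]] := essHD.2 S' hS' (fun y (S'y : S' y) => S'y.1).
  exists x; split; first by split; rewrite // rho_x.
  by move=> x0; apply: s0; rewrite -rho_x x0 raddf0.
move: Sh y0; rewrite -def_y iK => Sh ih0.
by exists h; split=> //; split=> // h0; apply: ih0; rewrite h0 raddf0.
Qed.

Lemma direct_summand_retract_image (H : A -> Prop) (D : G -> Prop) (r : {additive G -> G}) :
  is_subgroup H -> is_subgroup D -> (forall g, D (r g)) -> (forall d, D d -> r d = d) ->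
  essential_in (subgroup_image i H) D -> direct_summand (subgroup_image rho D).
Proof.
move=> hH hD rD r_id essHD; pose t : {additive G -> G} := r \o i \o rho.
have t_fix g : subgroup_image i H g -> t g = g.
  move=> iHg; have Dg := essHD.1 _ iHg.
  by case: iHg Dg => h _ <- Dih; rewrite /t /= iK r_id.
have tD x : D x -> D (t x) by move=> _; apply: rD.
have t_inj := fixing_essential_inj hD essHD t_fix.
have t_onto := fixing_essential_onto (is_subgroup_image i hH) hD essHD tD t_fix.
split; first exact: is_subgroup_image.
exists (fun a => r (i a) = 0); split.
  exact: (is_subgroup_preim (r \o i) (is_subgroup_zero G)).
split=> [_ [x Dx <-] tx0 | a]; first by rewrite (t_inj x Dx tx0) raddf0.
have [x Dx tx] := t_onto _ (rD (i a)).
exists (rho x), (a - rho x); split; first by exists x.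
by split; [rewrite !raddfB -tx subrr | rewrite addrC subrK].
Qed.

Lemma semi_gen_Bassian_retract : semi_gen_Bassian G -> semi_gen_Bassian A.
Proof.
move=> GB H hH /embeds_in_quotient_retract emb.
have [D [sD essHD]] := GB _ (is_subgroup_image i hH) emb.
have [r [rD r_id]] := direct_summand_projection sD.
exists (subgroup_image rho D); split.
  exact: direct_summand_retract_image hH sD.1 rD r_id essHD.
exact: essential_in_retract_image sD.1 essHD.
Qed.

End Retract.

Theorem theorem2p5 (G : zmodType) (K : G -> Prop) (A : zmodType)
    (i : {additive A -> G}) :
  semi_gen_Bassian G -> direct_summand K ->
  injective i -> (forall g, K g <-> exists a, i a = g) ->
  semi_gen_Bassian A.
Proof.
move=> GB sK inj_i Ki; have [rho iK] := direct_summand_retraction sK inj_i Ki.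
exact: semi_gen_Bassian_retract iK GB.
Qed.
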